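(* Let $k$, $d$ and $n$ be positive integers such that $k$ is even, $d \ge 2$, and $n \ge \max\{k, \frac{d+1}{8}(k^2-2sk+4s-4) + 1\}$, where $s \in \{0,1\}$ with $s \equiv \frac{k-2}{2} \pmod 2$. Then, for any function $f:[n] \rightarrow \{-1,1\}$ such that $|f([n])| \le \min \{n-k,\frac{d-1}{d+1}n\}$, there is a zero-sum $(d,k)$-block in $[n]$, i.e. a $(d,k)$-block $A\subseteq[n]$ with $f(A)=0$.
   Context: $[n]=\{1,\dots,n\}$; $f(Y)=\sum_{y\in Y}f(y)$. A $(d,k)$-block in $[n]$ is a set $\{a_1,\dots,a_k\}\subseteq[n]$ of integers with $a_1<a_2<\dots<a_k$ and $a_{i+1}-a_i\le d$ for all $1\le i\le k-1$. *)

From mathcomp Require Import all_boot all_order all_algebra.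
Set Implicit Arguments. Unset Strict Implicit. Unset Printing Implicit Defensive.
Import Order.TTheory GRing.Theory Num.Theory.

(* A (d,k)-block in [n] = {1,..,n}, represented by the increasing list
   [:: a_1; ...; a_k] of its elements: a_1 < ... < a_k, 1 <= a_i <= n,
   and a_{i+1} - a_i <= d for consecutive elements. *)
Definition dk_block (n d k : nat) (A : seq nat) : bool :=
  [&& size A == k,
      all (fun a => 0 < a <= n) A &
      sorted (fun a b => (a < b) && (b <= a + d)) A].

Definition fsum (f : nat -> int) (A : seq nat) : int := (\sum_(a <- A) f a)%R.

Definition fsum_n (f : nat -> int) (n : nat) : int := (\sum_(1 <= i < n.+1) f i)%R.

(* Let h = k/2 and let S be one colour class of f. If no (d,k)-block met S in h
   points, cover [n] from left to right by greedy walks of k points, each step going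
   to the next point of S at distance < d and jumping by d otherwise. Pushed back
   into [n], every walk is a block, so it meets S in some c < h points, and it then
   advances by at least dk - (d-1)c. Summing over the walks gives
   2|S| <= block_bound h, whereas the balance hypothesis gives (d+1)|S| >= n, and
   the lower bound on n makes these incompatible. So each colour has a block with
   h points of that colour. Finally, any block can be moved to {1..k} by lowering
   one element by one at a time; the number of +1's changes by at most one per move,
   so between the two rich blocks there is a block with exactly h values +1, i.e.
   with zero sum. *)

From mathcomp Require Import all_boot all_order all_algebra zify ring lra.
From Stdlib Require Import Classical_Prop.
Set Implicit Arguments. Unset Strict Implicit. Unset Printing Implicit Defensive.
Import Order.TTheory GRing.Theory Num.Theory.

Definition dgap (d : nat) : rel nat := fun a b => (a < b) && (b <= a + d).

Lemma dk_blockE n d k A :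
  dk_block n d k A = [&& size A == k, all (fun a => 0 < a <= n) A & sorted (dgap d) A].
Proof. by []. Qed.

Lemma dgap_ltn d : subrel (dgap d) ltn.
Proof. by move=> a b /andP[]. Qed.

Lemma index_iota_cat m p n : m <= p <= n ->
  index_iota m n = index_iota m p ++ index_iota p n.
Proof.
by move=> /andP[mp pn]; rewrite /index_iota -{2}(subnKC mp) -iotaD; congr iota; lia.
Qed.

Lemma leq_count_subset (T : eqType) (S : pred T) s t :
  uniq s -> {subset s <= t} -> count S s <= count S t.
Proof.
move=> uniq_s sub_st; rewrite -!size_filter; apply: uniq_leq_size; first exact: filter_uniq.
by move=> a; rewrite !mem_filter => /andP[-> /sub_st].
Qed.

(* Pushes a walk that leaves [n] back into [n]: with b = n - k + 1, its entries
   beyond n are replaced by the last positions of [n]. *)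
Fixpoint clamp (b : nat) (W : seq nat) : seq nat :=
  if W is a :: W' then minn a b :: clamp b.+1 W' else [::].

Lemma size_clamp b W : size (clamp b W) = size W.
Proof. by elim: W b => //= a W IH b; rewrite IH. Qed.

Lemma clamp_ltn b W c : c \in clamp b W -> c < b + size W.
Proof.
elim: W b => //= a W IH b; rewrite inE => /orP[/eqP -> | /IH]; lia.
Qed.

Lemma clamp_geq m b W : m <= b -> all (leq m) W -> all (leq m) (clamp b W).
Proof.
elim: W b => //= a W IH b mb /andP[ma mW]; rewrite IH ?andbT //; lia.
Qed.

Lemma path_clamp d a b W : 0 < d -> path (dgap d) a W ->
  path (dgap d) (minn a b) (clamp b.+1 W).
Proof.
move=> d_gt0; elim: W a b => //= a' W IH a b /andP[/andP[lt_aa' le_a'a] pW].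
by rewrite IH // andbT /dgap; lia.
Qed.

Lemma sorted_clamp d b W : 0 < d -> sorted (dgap d) W -> sorted (dgap d) (clamp b W).
Proof. by move=> d_gt0; case: W => //= a W; apply: path_clamp. Qed.

Lemma clamp_iota a b W : path ltn a W -> b < a -> clamp b (a :: W) = iota b (size W).+1.
Proof.
elim: W a b => [|a' W IH] a b; first by move=> _ ba /=; congr [:: _]; lia.
move=> /= /andP[aa' pW] ba; rewrite -/(clamp b.+1 (a' :: W)) (IH a') //; last lia.
by congr (_ :: _); lia.
Qed.

Lemma mem_clamp b W a : sorted ltn W -> a \in W -> a < b + size W -> a \in clamp b W.
Proof.
elim: W b => // w W IH b sW; have [le_wb | lt_bw] := leqP w b.
  rewrite /= !inE => /orP[/eqP -> _ | aW lt_a]; first by apply/orP; left; apply/eqP; lia.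
  by rewrite IH ?orbT ?(path_sorted sW) //; lia.
rewrite (clamp_iota sW lt_bw) mem_iota => aW lt_a.
have : w <= a.
  by move: aW; rewrite inE => /orP[/eqP -> // | /(allP (order_path_min ltn_trans sW)) /ltnW].
by move: lt_a => /=; lia.
Qed.

Lemma dk_block_clamp n d k W : 0 < d -> k <= n -> size W = k ->
  sorted (dgap d) W -> all (leq 1) W ->
  dk_block n d k (clamp (n - k).+1 W) /\ {subset [seq a <- W | a <= n] <= clamp (n - k).+1 W}.
Proof.
move=> d_gt0 kn sizeW sW posW; split.
  rewrite dk_blockE size_clamp sizeW eqxx sorted_clamp // andbT.
  apply/allP => c c_in; have := clamp_ltn c_in.
  by have := allP (clamp_geq (ltn0Sn (n - k)) posW) c c_in; rewrite sizeW; lia.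
move=> a; rewrite mem_filter => /andP[le_an aW]; apply: mem_clamp => //.
- exact: sub_sorted (@dgap_ltn d) _ sW.
- rewrite sizeW; lia.
Qed.

Lemma dgap_iota_or_decr d x A : 1 < d -> sorted (dgap d) A -> all (ltn x) A ->
  A = iota x.+1 (size A) \/
  exists A1 a A2, [/\ A = A1 ++ a :: A2, sorted (dgap d) (A1 ++ a.-1 :: A2)
                    & all (ltn x) (A1 ++ a.-1 :: A2)].
Proof.
move=> d_gt1; elim: A x => [|a A IH] x; first by left.
move=> sA /= /andP[lt_xa xA].
have aA : all (ltn a) A := order_path_min ltn_trans (sub_path (@dgap_ltn d) sA).
have [eA | [A1 [b [A2 [eA sA' A'a]]]]] := IH a (path_sorted sA) aA.
  have [e_xa | lt_x1a] := eqVneq a x.+1.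
    by left; rewrite /= {1}eA e_xa.
  right; exists [::], a, A; split => //=; last by rewrite xA andbT; lia.
  move: sA; rewrite eA; case: (size A) => [|L] //= /andP[_ ->].
  by rewrite andbT /dgap; lia.
right; exists (a :: A1), b, A2; split; first by rewrite eA.
  move: sA sA' A'a; rewrite {}eA.
  by case: A1 => [|c A1] /= /andP[/andP[_ le] _] -> /andP[lt _]; rewrite andbT /dgap; lia.
by rewrite /= lt_xa; apply: sub_all A'a => y; apply: ltn_trans.
Qed.

Lemma dk_block_ivt n d k (S : pred nat) A c : 1 < d -> dk_block n d k A ->
  minn (count S A) (count S (iota 1 k)) <= c <= maxn (count S A) (count S (iota 1 k)) ->
  exists2 B, dk_block n d k B & count S B = c.
Proof.
move=> d_gt1; have [r] := ubnP (sumn A); elim: r A => // r IH A lt_r blkA.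
move: (blkA); rewrite dk_blockE => /and3P[/eqP sizeA rangeA sA].
have posA : all (ltn 0) A by apply: sub_all rangeA => a /andP[].
have [eA | [A1 [a [A2 [eA sA' posA']]]]] := dgap_iota_or_decr d_gt1 sA posA.
  by rewrite -[k in iota 1 k]sizeA -eA => cA; exists A => //; lia.
have [<- | neq_c between] := eqVneq (count S A) c; first by exists A.
move: lt_r rangeA between neq_c; rewrite eA sumn_cat /= => lt_r rangeA between neq_c.
apply: (IH (A1 ++ a.-1 :: A2)).
- rewrite sumn_cat /=; move: posA; rewrite eA all_cat /= => /and3P[_ a_gt0 _]; lia.
- rewrite dk_blockE size_cat /= -sizeA eA size_cat eqxx sA' /=.
  move: rangeA posA'; rewrite !all_cat /= => /and3P[-> /andP[_ le_an] ->] /and3P[_ a_gt1 _].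
  by rewrite !andbT; lia.
- move: between neq_c; rewrite !count_cat /=.
  by case: (S a); case: (S a.-1); lia.
Qed.

Lemma count_index_iota1 (S : pred nat) x : count S (index_iota x x.+1) = S x.
Proof. by rewrite /index_iota subSnn /= addn0. Qed.

Section GreedyWalk.
Variables (d : nat) (S : pred nat).
Hypothesis d_gt0 : 0 < d.

(* [find] returns [d.-1] when S has no point in (y, y + d), so the step is then y + d. *)
Definition greedy_step y := y.+1 + find S (iota y.+1 d.-1).

Lemma greedy_step_dgap y : dgap d y (greedy_step y).
Proof.
by rewrite /dgap /greedy_step; have := find_size S (iota y.+1 d.-1); rewrite size_iota; lia.
Qed.

Lemma greedy_step_skip y l : y < l < greedy_step y -> ~~ S l.
Proof.
move=> /andP[lt_yl lt_l]; have lt_find : l - y.+1 < find S (iota y.+1 d.-1).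
  by move: lt_l; rewrite /greedy_step; lia.
have := before_find 0 lt_find; have := find_size S (iota y.+1 d.-1).
by rewrite size_iota => le_find; rewrite nth_iota ?subnKC // => [-> | ]; lia.
Qed.

Lemma greedy_step_span y : y + d <= greedy_step y + d.-1 * S (greedy_step y).
Proof.
have := find_size S (iota y.+1 d.-1); rewrite size_iota /greedy_step.
have [hasS | noS] := boolP (has S (iota y.+1 d.-1)); last first.
  by move: noS; rewrite has_find size_iota -leqNgt; lia.
have := nth_find 0 hasS; move: hasS; rewrite has_find size_iota => lt_find.
by rewrite nth_iota // => ->; lia.
Qed.

Lemma iter_greedy_step_geq x t : x <= iter t greedy_step x.
Proof.
elim: t => // t IH; rewrite iterS; apply: leq_trans IH (ltnW _).
by case/andP: (greedy_step_dgap (iter t greedy_step x)).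
Qed.

Lemma sorted_greedy_traject x t : sorted (dgap d) (traject greedy_step x t).
Proof.
case: t => //= t; apply: sub_path (fpath_traject greedy_step x t).
by move=> y z /eqP <-; apply: greedy_step_dgap.
Qed.

Lemma greedy_traject_geq x t : all (leq x) (traject greedy_step x t).
Proof. by apply/allP => y /trajectP[i _ ->]; apply: iter_greedy_step_geq. Qed.

Lemma count_greedy_gap y : count S (index_iota y (greedy_step y)) = S y.
Proof.
have /andP[lt_y _] := greedy_step_dgap y.
rewrite (@index_iota_cat y y.+1) ?leqnSn // count_cat count_index_iota1.
rewrite -[RHS]addn0; congr (_ + _); apply/eqP; rewrite eqn0Ngt -has_count.
by apply/hasPn => l; rewrite mem_index_iota; apply: greedy_step_skip.
Qed.

Lemma count_greedy_traject x t :
  count S (traject greedy_step x t.+1) = count S (index_iota x (iter t greedy_step x).+1).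
Proof.
elim: t x => [|t IH] x; first by rewrite count_index_iota1 /= addn0.
have le_x := iter_greedy_step_geq (greedy_step x) t.
have /andP[lt_x _] := greedy_step_dgap x.
rewrite iterSr (@index_iota_cat x (greedy_step x)); last by rewrite (ltnW lt_x) leqW.
by rewrite count_cat count_greedy_gap -IH.
Qed.

Lemma greedy_traject_span x t :
  x + d * t + d.-1 * S x <= iter t greedy_step x + d.-1 * count S (traject greedy_step x t.+1).
Proof.
elim: t x => [|t IH] x; first by rewrite /= addn0 muln0 addn0.
have := IH (greedy_step x); have := greedy_step_span x.
by rewrite iterSr /= mulnS mulnDr; lia.
Qed.

End GreedyWalk.

Section SegmentBound.
Variables (n d k h : nat) (S : pred nat).
Hypotheses (d_gt0 : 0 < d) (k_gt0 : 0 < k) (k_le_n : k <= n).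
Hypothesis S_range : forall i, S i -> 0 < i <= n.
Hypothesis poor : forall A, dk_block n d k A -> count S A < h.

Lemma count_beyond a b : n < a -> count S (index_iota a b) = 0.
Proof.
move=> lt_na; apply/eqP; rewrite eqn0Ngt -has_count; apply/hasPn => i.
by rewrite mem_index_iota => /andP[le_ai _]; apply/negP => /S_range; lia.
Qed.

Lemma count_tail_split x y : x <= y -> x <= n.+1 ->
  count S (index_iota x n.+1) = count S (index_iota x y) + count S (index_iota y n.+1).
Proof.
move=> le_xy le_xn; have [le_yn | lt_ny] := leqP y n.+1.
  by rewrite (@index_iota_cat x y) ?le_xy // count_cat.
rewrite (@index_iota_cat x n.+1 y); last by rewrite le_xn ltnW.
by rewrite count_cat (@count_beyond n.+1) // (@count_beyond y) ?addn0 // ltnW.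
Qed.

Lemma count_greedy_traject_lt x : S x -> count S (traject (greedy_step d S) x k) < h.
Proof.
move=> Sx; set W := traject (greedy_step d S) x k.
have [blk sub] : dk_block n d k (clamp (n - k).+1 W) /\
    {subset [seq a <- W | a <= n] <= clamp (n - k).+1 W}.
  apply: dk_block_clamp; rewrite ?size_traject ?sorted_greedy_traject //.
  by apply: (sub_all _ (greedy_traject_geq S d_gt0 x k)) => a; have := S_range Sx; lia.
apply: leq_ltn_trans (poor blk).
have -> : count S W = count S [seq a <- W | a <= n].
  rewrite count_filter; apply: eq_count => a /=.
  by case: (boolP (S a)) => // /S_range /andP[_ ->].
apply: leq_count_subset sub; apply/filter_uniq/(sorted_uniq ltn_trans ltnn).
exact: sub_sorted (@dgap_ltn d) _ (sorted_greedy_traject S d_gt0 x k).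
Qed.

(* q full walks of k points carry J <= q (h-1) points of S and a last stretch carries
   j <= h-1; a walk carrying c points of S advances by at least dk - (d-1)c, whence
   the last inequality. *)
Definition segment_bound x := exists q J j,
  [/\ count S (index_iota x n.+1) = J + j, J <= q * h.-1, j <= h.-1
    & x + d * k * q + j <= n.+1 + d.-1 * J].

Lemma segment_bound_traject x : S x -> (forall y, x < y <= n.+1 -> segment_bound y) ->
  segment_bound x.
Proof.
move=> Sx IH; have /andP[x_gt0 le_xn] := S_range Sx.
set e := iter k.-1 (greedy_step d S) x; set c := count S (traject (greedy_step d S) x k).
have c_lt : c < h := count_greedy_traject_lt Sx.
have span : x + d * k.-1 + d.-1 <= e + d.-1 * c.
  by have := greedy_traject_span S d_gt0 x k.-1; rewrite prednK // Sx muln1.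
have le_xe : x <= e := iter_greedy_step_geq S d_gt0 x k.-1.
have cnt_x : count S (index_iota x n.+1) = c + count S (index_iota e.+1 n.+1).
  by rewrite (@count_tail_split x e.+1) ?leqW // -(count_greedy_traject S d_gt0) prednK.
have [lt_en | le_ne] := ltnP e n; last first.
  exists 0, 0, c; rewrite cnt_x count_beyond ?ltnS // muln0 addn0; split => //; first lia.
  have := count_size S (index_iota x n.+1); rewrite cnt_x count_beyond ?ltnS // size_iota.
  lia.
have [q [J [j [cnt_e le_J le_j ineq]]]] := IH e.+1 ltac:(lia).
exists q.+1, (c + J), j; split; [by rewrite cnt_x cnt_e addnA | | done | ].
  by rewrite mulSn; lia.
have dk : d * k = d * k.-1 + d by rewrite -mulnSr prednK.
rewrite mulnS mulnDr; move: span ineq.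
set A := d * k * q; set B := d.-1 * c; set C := d.-1 * J.
by rewrite dk; set D := d * k.-1; lia.
Qed.

Lemma segment_bound_all x : x <= n.+1 -> segment_bound x.
Proof.
have [r] := ubnP (n.+1 - x); elim: r x => // r IH x lt_r le_xn.
have IHy y : x < y <= n.+1 -> segment_bound y by move=> /andP[lt_xy le_yn]; apply: IH; lia.
have [Sx | nSx] := boolP (S x); first exact: segment_bound_traject.
have [-> | ne_xn] := eqVneq x n.+1.
  by exists 0, 0, 0; rewrite /index_iota subnn !muln0 !addn0.
have [q [J [j [cnt_x1 le_J le_j ineq]]]] := IHy x.+1 ltac:(lia).
exists q, J, j; split => //; last lia.
by rewrite (@count_tail_split x x.+1) // count_index_iota1 (negbTE nSx).
Qed.

End SegmentBound.

(* With k = 2h and s = [h even] this is (k^2 - 2sk + 4s - 4)/4, the quantity in the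
   lower bound on n. *)
Definition block_bound h := if odd h then h.-1 * h.+1 else h * h.-1.

Lemma segment_count_bound d h n q J j : 0 < d -> 0 < h -> J <= q * h.-1 -> j <= h.-1 ->
  d * (h + h) * q + j <= n + d.-1 * J -> n <= d.+1 * (J + j) -> (J + j).*2 <= block_bound h.
Proof.
move=> d_gt0 h_gt0 le_J le_j ineq le_n.
have le_2J : J.*2 <= q.*2 * h.-1 by rewrite -doubleMl leq_double.
have two_q : q.*2 <= j.
  have : d * ((h + h) * q) <= d * (J.*2 + j).
    have eJ : d.-1 * J + J = d * J by rewrite -mulSnr prednK.
    move: ineq le_n eJ; rewrite -mulnA mulSn -addnn !mulnDr.
    by set X := d * J; set Z := d.-1 * J; lia.
  rewrite leq_pmul2l // -(prednK h_gt0) addSn addnS !mulSn -addnn mulnDl.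
  by move: le_2J; rewrite mulnC; set Y := h.-1 * q; lia.
rewrite /block_bound; have := odd_double_half h; case: (odd h) => /= eh.
  have le1 : q.*2 * h.-1 <= j * h.-1 := leq_mul two_q (leqnn _).
  have le2 : j * h.+1 <= h.-1 * h.+1 := leq_mul le_j (leqnn _).
  have e : j * h.+1 = j * h.-1 + j.*2 by rewrite -(prednK h_gt0) !mulnS; lia.
  by move: le1 le2 e; set A := q.*2 * h.-1; set B := j * h.-1; set C := j * h.+1; lia.
have le1 : q.*2 * h.-1 <= h.-2 * h.-1 by apply: leq_mul => //; lia.
have e : h.-2 * h.-1 + h.-1.*2 = h * h.-1.
  by rewrite -mul2n -mulnDl; congr (_ * _); lia.
by move: le1 e; set A := q.*2 * h.-1; set B := h.-2 * h.-1; set C := h * h.-1; lia.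
Qed.

Lemma rich_block n d k h (S : pred nat) : 0 < d -> 0 < h -> k = h + h -> k <= n ->
  n <= d.+1 * count S (index_iota 1 n.+1) -> d.+1 * block_bound h < n.*2 ->
  exists2 A, dk_block n d k A & h <= count S A.
Proof.
move=> d_gt0 h_gt0 k_eq k_le_n dense small_n; apply: NNPP => no_rich.
pose S' := [pred i | S i && (0 < i <= n)].
have S'_range i : S' i -> 0 < i <= n by case/andP.
have poor A : dk_block n d k A -> count S' A < h.
  move=> blkA; rewrite ltnNge; apply/negP => rich; apply: no_rich; exists A => //.
  by apply: leq_trans rich (sub_count _ _) => i /andP[].
have k_gt0 : 0 < k by rewrite k_eq addn_gt0 h_gt0.
have [q [J [j [cnt le_J le_j ineq]]]] :=
  segment_bound_all d_gt0 k_gt0 k_le_n S'_range poor (x := 1) isT.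
have cnt_S : count S (index_iota 1 n.+1) = J + j.
  by rewrite -cnt; apply: eq_in_count => i; rewrite mem_index_iota /= => ->; rewrite andbT.
have mass : (J + j).*2 <= block_bound h.
  apply: (segment_count_bound (n := n) d_gt0 h_gt0 le_J le_j); last by rewrite -cnt_S.
  by move: ineq; rewrite k_eq add1n !addSn ltnS.
have : n.*2 <= d.+1 * block_bound h.
  by apply: leq_trans (leq_mul (leqnn d.+1) mass); rewrite -doubleMr leq_double -cnt_S.
by rewrite leqNgt small_n.
Qed.

Lemma minority_bound (R : realFieldType) d p m :
  (`|p%:R - m%:R| <= (d%:R - 1) / (d%:R + 1) * (p + m)%:R :> R)%R -> p + m <= d.+1 * m.
Proof.
move=> /(le_trans (ler_norm _)); rewrite mulrAC ler_pdivlMr ?ltr_wpDl // => le_pm.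
by rewrite -(ler_nat R) natrM natrD -addn1 natrD; move: le_pm; rewrite natrD; nra.
Qed.

Lemma threshold_block_bound (R : realFieldType) (d h k n s : nat) : k = h + h -> s = ~~ odd h ->
  ((d.+1)%:R / 8%:R * ((k ^ 2)%:R - (2 * s * k)%:R + (4 * s)%:R - 4%:R) + 1 <= n%:R :> R)%R ->
  d.+1 * block_bound h < n.*2.
Proof.
move=> k_eq s_eq; have e : k ^ 2 + 4 * s = 2 * s * k + 4 + 4 * block_bound h.
  by rewrite k_eq s_eq /block_bound; case: (odd h) (odd_double_half h) => /= eh; nia.
have eR : ((k ^ 2)%:R - (2 * s * k)%:R + (4 * s)%:R - 4%:R = 4%:R * (block_bound h)%:R :> R)%R.
  by move/(congr1 (fun x => (x%:R : R)%R)): e; rewrite !natrD natrM; lra.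
rewrite eR -(ltr_nat R) natrM -mul2n natrM; lra.
Qed.

Section Colouring.
Variable f : nat -> int.
Local Notation pos := [pred a | f a == 1%R].
Local Notation neg := [pred a | f a == (-1)%R].
Local Notation signed A := {in A, forall a, f a = 1%R \/ f a = (-1)%R}.

Lemma fsum_sign A : signed A -> fsum f A = ((count pos A)%:Z - (count neg A)%:Z)%R.
Proof.
elim: A => [|a A IH] sign; first by rewrite /fsum big_nil.
rewrite /fsum big_cons -/(fsum f A) IH => [|b b_in]; last by apply: sign; rewrite inE b_in orbT.
by case: (sign a (mem_head _ _)) => e_a; rewrite /= e_a /= !PoszD; ring.
Qed.

Lemma count_sign A : signed A -> count pos A + count neg A = size A.
Proof.
move=> sign; rewrite -count_predUI -[RHS]addn0 -(count_predT A); congr (_ + _).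
  by apply: eq_in_count => a /sign /= [] ->.
by apply/eqP; rewrite eqn0Ngt -has_count; apply/hasPn => a /sign /= [] ->.
Qed.

Variables n d k : nat.
Hypothesis f_sign : forall i, 1 <= i <= n -> f i = 1%R \/ f i = (-1)%R.

Lemma sign_in A : all (fun a => 0 < a <= n) A -> signed A.
Proof. by move=> /allP rangeA a /rangeA; apply: f_sign. Qed.

Lemma dense_colour_classes :
  ((`|fsum_n f n|)%:~R <= (d%:R - 1) / (d%:R + 1) * (n%:R : rat))%R ->
  n <= d.+1 * count pos (index_iota 1 n.+1) /\ n <= d.+1 * count neg (index_iota 1 n.+1).
Proof.
have sign_I : signed (index_iota 1 n.+1).
  by apply: sign_in; apply/allP => i; rewrite mem_index_iota.
set p := count pos _; set m := count neg _ => balanced.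
have pm : p + m = n by rewrite (count_sign sign_I) size_iota subSS subn0.
have bal : (`|p%:R - m%:R| <= (d%:R - 1) / (d%:R + 1) * (p + m)%:R :> rat)%R.
  by move: balanced; rewrite pm [fsum_n f n](fsum_sign sign_I) intr_norm intrB; apply.
split; rewrite -{1}pm; last exact: minority_bound bal.
by rewrite addnC; apply: (minority_bound (R := rat)); rewrite distrC addnC.
Qed.

Lemma zero_sum_block h : 1 < d -> k = h + h ->
  (exists2 A, dk_block n d k A & h <= count neg A) ->
  (exists2 A, dk_block n d k A & h <= count pos A) ->
  exists B, dk_block n d k B /\ fsum f B = 0%R.
Proof.
move=> d_gt1 k_eq [Am Am_blk Am_rich] [Ap Ap_blk Ap_rich].
have sign_blk A : dk_block n d k A -> signed A.
  by case/and3P => _ rangeA _; apply: sign_in.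
have count_blk A : dk_block n d k A -> count pos A + count neg A = k.
  by move=> blkA; rewrite (count_sign (sign_blk A blkA)); case/and3P: blkA => /eqP.
have [B B_blk B_pos] : exists2 B, dk_block n d k B & count pos B = h.
  have := count_blk _ Am_blk; have := count_blk _ Ap_blk.
  case: (leqP h (count pos (iota 1 k))) => [le_h | lt_h] e_p e_m.
    by apply: dk_block_ivt d_gt1 Am_blk _; lia.
  by apply: dk_block_ivt d_gt1 Ap_blk _; lia.
exists B; split => //; rewrite (fsum_sign (sign_blk B B_blk)).
have := count_blk B B_blk; rewrite B_pos k_eq => /addnI ->.
by rewrite subrr.
Qed.

End Colouring.

Theorem theorem3p1 (k d n s : nat) (f : nat -> int) :
  0 < k -> ~~ odd k -> 2 <= d -> 0 < n ->
  s <= 1 -> s = (k - 2) %/ 2 %[mod 2] ->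
  k <= n ->
  ((d.+1)%:R / 8%:R * ((k ^ 2)%:R - (2 * s * k)%:R + (4 * s)%:R - 4%:R) + 1
     <= (n%:R : rat))%R ->
  (forall i, 1 <= i <= n -> f i = 1%R \/ f i = (-1)%R) ->
  ((`|fsum_n f n|)%:~R <= (n%:R - k%:R : rat))%R ->
  ((`|fsum_n f n|)%:~R <= (d%:R - 1) / (d%:R + 1) * (n%:R : rat))%R ->
  exists A : seq nat, dk_block n d k A /\ fsum f A = 0%R.
Proof.
move=> k_gt0 k_even d_gt1 _ s_le1 s_mod k_le_n threshold f_sign _ balanced.
set h := k./2; have k_eq : k = h + h by rewrite addnn even_halfK.
have h_gt0 : 0 < h by lia.
have s_eq : s = ~~ odd h by have := odd_double_half h; case: (odd h) => /= eh; lia.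
have small_n := threshold_block_bound k_eq s_eq threshold.
have [dense_pos dense_neg] := dense_colour_classes f_sign balanced.
have d_gt0 : 0 < d := ltnW d_gt1.
apply: (zero_sum_block f_sign d_gt1 k_eq).
  exact: rich_block d_gt0 h_gt0 k_eq k_le_n dense_neg small_n.
exact: rich_block d_gt0 h_gt0 k_eq k_le_n dense_pos small_n.
Qed.
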